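(* Let $n\ge1$, $\rho\in\mathbb{R}$, and let $Q_n$ be the $(4n+3)$-dimensional quaternion Lie group with left-invariant frame $e_1,\dots,e_{4n+3}$ as described in the context. Let $g_0$ be a left-invariant metric on $Q_n$ diagonal in this frame, and let $g(t)$ be a solution of the Ricci–Bourguignon flow $\frac{\partial}{\partial t}g(t)=-2\mathrm{Ric}(g(t))+2\rho R(g(t))g(t)$, $g(0)=g_0$, by left-invariant metrics diagonal in this frame, with components $g_\alpha(t)=g(t)(e_\alpha,e_\alpha)$. Then: (a) $\frac{d}{dt}\Big(g_1(t)g_2(t)\cdots g_{4n}(t)\big(g_{4n+1}(t)g_{4n+2}(t)g_{4n+3}(t)\big)^{\frac{2(1-2n\rho)}{1+3\rho}}\Big)=0$; (b) if $\rho<0$ and $G_k(t)=\int_0^t g_k(r)\,dr$ for $k=4n+1,4n+2,4n+3$, then $\lim_{t\to+\infty}G_k(t)=+\infty$; (c) if moreover $g_j(0)=g_1(0)$ for $1\le j\le 4n$ and $g_{4n+1}(0)=g_{4n+2}(0)=g_{4n+3}(0)$, then the solution has the form $g_j(t)=g_1(0)(1+ct)^{\frac{3(1-2n\rho)}{6+2n-6n\rho}}$ for $1\le j\le 4n$, and $g_{4n+k}(t)=g_{4n+1}(0)(1+ct)^{\frac{-n(1+3\rho)}{3+n-3n\rho}}$ for $1\le k\le 3$, where $c=\frac{g_{4n+1}(0)}{g_1(0)^2}(6+2n-6n\rho)$.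
   Context: $Q_n$ is the simply connected 2-step nilpotent Lie group $\mathbb{R}^{4n}\times\mathbb{R}^3$ whose Lie algebra has basis $X_{1l},X_{2l},X_{3l},X_{4l}$ ($1\le l\le n$), $Z_1,Z_2,Z_3$, with nonzero brackets (for each $l$) $[X_{1l},X_{2l}]=-Z_1$, $[X_{1l},X_{3l}]=Z_3$, $[X_{1l},X_{4l}]=Z_2$, $[X_{2l},X_{3l}]=Z_2$, $[X_{2l},X_{4l}]=-Z_3$, $[X_{3l},X_{4l}]=-Z_1$, all other brackets between basis elements being zero (and $Z_1,Z_2,Z_3$ central). Set $e_i=X_{1i}$, $e_{n+i}=X_{2i}$, $e_{2n+i}=X_{3i}$, $e_{3n+i}=X_{4i}$ ($1\le i\le n$), $e_{4n+r}=Z_r$ ($r=1,2,3$), viewed as left-invariant vector fields. A left-invariant metric is diagonal if $g(e_\alpha,e_\beta)=0$ for $\alpha\ne\beta$. For diagonal metrics the flow is equivalent to the ODE system $g_i'=\frac{g_{4n+1}}{g_{n+i}}+\frac{g_{4n+3}}{g_{2n+i}}+\frac{g_{4n+2}}{g_{3n+i}}-\rho g_i\Sigma'$, $g_{n+i}'=\frac{g_{4n+1}}{g_i}+\frac{g_{4n+2}}{g_{2n+i}}+\frac{g_{4n+3}}{g_{3n+i}}-\rho g_{n+i}\Sigma'$, $g_{2n+i}'=\frac{g_{4n+3}}{g_i}+\frac{g_{4n+2}}{g_{n+i}}+\frac{g_{4n+1}}{g_{3n+i}}-\rho g_{2n+i}\Sigma'$, $g_{3n+i}'=\frac{g_{4n+2}}{g_i}+\frac{g_{4n+3}}{g_{n+i}}+\frac{g_{4n+1}}{g_{2n+i}}-\rho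 g_{3n+i}\Sigma'$, $g_{4n+k}'=-g_{4n+k}^2\Sigma_k-\rho g_{4n+k}\Sigma'$, where $\Sigma_1=\sum_{i=1}^n(\frac{1}{g_ig_{n+i}}+\frac{1}{g_{2n+i}g_{3n+i}})$, $\Sigma_2=\sum_{i=1}^n(\frac{1}{g_ig_{3n+i}}+\frac{1}{g_{n+i}g_{2n+i}})$, $\Sigma_3=\sum_{i=1}^n(\frac{1}{g_ig_{2n+i}}+\frac{1}{g_{n+i}g_{3n+i}})$ and $\Sigma'=\sum_{k=1}^3 g_{4n+k}\Sigma_k$ (the scalar curvature is $R=-\frac12\Sigma'$). In part (b) the solution is understood to be defined for all $t\ge0$; in part (c) the formula is understood for $t$ with $1+ct>0$. *)

From Stdlib Require Import Reals Lra Lia.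
From Coquelicot Require Import Coquelicot.
Open Scope R_scope.

(* A diagonal left-invariant metric on Q_n along a curve is encoded by its
   components g alpha t = g(t)(e_alpha, e_alpha), alpha = 1, ..., 4n+3
   (values of g at other indices are irrelevant). *)

Definition sum1 (n : nat) (f : nat -> R) : R := sum_n_m f 1 n.

Fixpoint prod1 (f : nat -> R) (m : nat) : R :=
  match m with
  | O => 1
  | S m' => prod1 f m' * f (S m')
  end.

Section Sig.
Variables (n : nat) (g : nat -> R -> R) (t : R).
Let X1 i := g i t.
Let X2 i := g (n + i)%nat t.
Let X3 i := g (2 * n + i)%nat t.
Let X4 i := g (3 * n + i)%nat t.
Let Z k := g (4 * n + k)%nat t.

Definition Sigma1 : R := sum1 n (fun i => / (X1 i * X2 i) + / (X3 i * X4 i)).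
Definition Sigma2 : R := sum1 n (fun i => / (X1 i * X4 i) + / (X2 i * X3 i)).
Definition Sigma3 : R := sum1 n (fun i => / (X1 i * X3 i) + / (X2 i * X4 i)).
Definition Sigmap : R := Z 1%nat * Sigma1 + Z 2%nat * Sigma2 + Z 3%nat * Sigma3.
End Sig.

(* The ODE system (equivalent to the Ricci-Bourguignon flow for diagonal
   left-invariant metrics on Q_n) holds at time t. *)
Definition QnRB_ODE (n : nat) (rho : R) (g : nat -> R -> R) (t : R) : Prop :=
  let X1 i := g i t in
  let X2 i := g (n + i)%nat t in
  let X3 i := g (2 * n + i)%nat t in
  let X4 i := g (3 * n + i)%nat t in
  let Z k := g (4 * n + k)%nat t in
  let S' := Sigmap n g t in
  (forall i : nat, (1 <= i <= n)%nat ->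
     is_derive (g i) t
       (Z 1%nat / X2 i + Z 3%nat / X3 i + Z 2%nat / X4 i - rho * X1 i * S') /\
     is_derive (g (n + i)%nat) t
       (Z 1%nat / X1 i + Z 2%nat / X3 i + Z 3%nat / X4 i - rho * X2 i * S') /\
     is_derive (g (2 * n + i)%nat) t
       (Z 3%nat / X1 i + Z 2%nat / X2 i + Z 1%nat / X4 i - rho * X3 i * S') /\
     is_derive (g (3 * n + i)%nat) t
       (Z 2%nat / X1 i + Z 3%nat / X2 i + Z 1%nat / X3 i - rho * X4 i * S')) /\
  is_derive (g (4 * n + 1)%nat) t
    (- (Z 1%nat) ^ 2 * Sigma1 n g t - rho * Z 1%nat * S') /\
  is_derive (g (4 * n + 2)%nat) t
    (- (Z 2%nat) ^ 2 * Sigma2 n g t - rho * Z 2%nat * S') /\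
  is_derive (g (4 * n + 3)%nat) t
    (- (Z 3%nat) ^ 2 * Sigma3 n g t - rho * Z 3%nat * S').

(* g is a solution of the flow on the time interval [0, T) by diagonal
   left-invariant metrics: all components positive on [0,T), continuous
   from the right at 0 (so that g(0) is the initial metric), and the ODE
   system holds for 0 < t < T. *)
Definition QnRB_solution (n : nat) (rho : R) (T : Rbar)
    (g : nat -> R -> R) : Prop :=
  (forall (a : nat) (t : R), (1 <= a <= 4 * n + 3)%nat -> 0 <= t ->
      Rbar_lt t T -> 0 < g a t) /\
  (forall a : nat, (1 <= a <= 4 * n + 3)%nat ->
      filterlim (g a) (at_right 0) (locally (g a 0))) /\
  (forall t : R, 0 < t -> Rbar_lt t T -> QnRB_ODE n rho g t).

Definition QnRB_invariant (n : nat) (rho : R) (g : nat -> R -> R) (t : R) : R :=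
  prod1 (fun a => g a t) (4 * n) *
  Rpower (g (4 * n + 1)%nat t * g (4 * n + 2)%nat t * g (4 * n + 3)%nat t)
         (2 * (1 - 2 * INR n * rho) / (1 + 3 * rho)).

From Stdlib Require Import Reals Lra Lia.
From Coquelicot Require Import Coquelicot.
Open Scope R_scope.

(* (a) is a logarithmic-derivative computation: along the flow
     sum_{a <= 4n} g_a'/g_a = (2 - 4 n rho) Sigma',
     sum_{k <= 3} g_{4n+k}'/g_{4n+k} = -(1 + 3 rho) Sigma',
   and the exponent 2 (1 - 2 n rho) / (1 + 3 rho) makes the two contributions cancel.
   (b) For rho <= 0 the components g_a, a <= 4n, are nondecreasing, so each Sigma_k stays below
   its initial value; since Sigma' >= g_{4n+k} Sigma_k, the function Z = g_{4n+k} satisfies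
   Z' >= -K Z^2, hence Z(t) >= 1 / (1/Z(0) + K t), whose integral diverges like log t.
   (c) The power functions of the statement solve the ODE system with the same initial data.
   The vector field is locally Lipschitz on the positive orthant, so a Gronwall estimate for
   the squared distance between the two solutions shows that they coincide. *)

Lemma sum1_O (f : nat -> R) : sum1 0 f = 0.
Proof. unfold sum1; rewrite sum_n_m_zero; [reflexivity | lia]. Qed.

Lemma sum1_S (m : nat) (f : nat -> R) : sum1 (S m) f = sum1 m f + f (S m).
Proof. unfold sum1; rewrite sum_n_Sm; [reflexivity | lia]. Qed.

Lemma sum1_ext (m : nat) (f g : nat -> R) :
  (forall i, (1 <= i <= m)%nat -> f i = g i) -> sum1 m f = sum1 m g.
Proof. intros H; apply sum_n_m_ext_loc; auto. Qed.

Lemma sum1_plus (m : nat) (f g : nat -> R) :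
  sum1 m (fun i => f i + g i) = sum1 m f + sum1 m g.
Proof. apply (sum_n_m_plus f g). Qed.

Lemma sum1_scal_l (m : nat) (c : R) (f : nat -> R) :
  sum1 m (fun i => c * f i) = c * sum1 m f.
Proof. apply (sum_n_m_mult_l c f). Qed.

Lemma sum1_const (m : nat) (c : R) : sum1 m (fun _ => c) = INR m * c.
Proof. unfold sum1; rewrite sum_n_m_const; do 3 f_equal; lia. Qed.

Lemma sum1_le (m : nat) (f g : nat -> R) :
  (forall i, (1 <= i <= m)%nat -> f i <= g i) -> sum1 m f <= sum1 m g.
Proof.
  induction m as [|m IH]; intros H.
  - rewrite !sum1_O; lra.
  - rewrite !sum1_S.
    apply Rplus_le_compat; [apply IH; intros; apply H|apply H]; lia.
Qed.

Lemma sum1_nonneg (m : nat) (f : nat -> R) :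
  (forall i, (1 <= i <= m)%nat -> 0 <= f i) -> 0 <= sum1 m f.
Proof.
  intros H; rewrite <- (Rmult_0_r (INR m)), <- sum1_const; apply sum1_le; auto.
Qed.

Lemma sum1_term_le (m : nat) (f : nat -> R) (a : nat) :
  (forall i, (1 <= i <= m)%nat -> 0 <= f i) -> (1 <= a <= m)%nat -> f a <= sum1 m f.
Proof.
  induction m as [|m IH]; intros H Ha; [lia|].
  rewrite sum1_S. destruct (Nat.eq_dec a (S m)) as [->|Hne].
  - assert (0 <= sum1 m f) by (apply sum1_nonneg; intros; apply H; lia). lra.
  - assert (f a <= sum1 m f) by (apply IH; [intros; apply H|]; lia).
    assert (0 <= f (S m)) by (apply H; lia). lra.
Qed.

Lemma sum1_shift (k m : nat) (f : nat -> R) :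
  sum1 m (fun i => f (k + i)%nat) = sum_n_m f (S k) (k + m).
Proof.
  induction m as [|m IH].
  - rewrite sum1_O, sum_n_m_zero; [reflexivity | lia].
  - rewrite sum1_S, IH, Nat.add_succ_r, sum_n_Sm; [reflexivity | lia].
Qed.

Lemma sum1_four_blocks (n : nat) (f : nat -> R) :
  sum1 (4 * n) f = sum1 n (fun i => f i + f (n + i)%nat + f (2 * n + i)%nat + f (3 * n + i)%nat).
Proof.
  rewrite !sum1_plus, !sum1_shift. unfold sum1.
  rewrite (sum_n_m_Chasles f 1 n (4 * n)), (sum_n_m_Chasles f (S n) (n + n) (4 * n)),
    (sum_n_m_Chasles f (S (n + n)) (2 * n + n) (4 * n)) by lia.
  replace (n + n)%nat with (2 * n)%nat by lia.
  replace (2 * n + n)%nat with (3 * n)%nat by lia.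
  replace (3 * n + n)%nat with (4 * n)%nat by lia.
  unfold plus; simpl; ring.
Qed.

Lemma is_derive_sum1 (m : nat) (f : nat -> R -> R) (d : nat -> R) (x : R) :
  (forall a, (1 <= a <= m)%nat -> is_derive (f a) x (d a)) ->
  is_derive (fun s => sum1 m (fun a => f a s)) x (sum1 m d).
Proof.
  induction m as [|m IH]; intros H.
  - apply (is_derive_ext (fun _ => 0)); [intros; now rewrite sum1_O|].
    rewrite sum1_O; exact (is_derive_const 0 x).
  - apply (is_derive_ext (fun s => sum1 m (fun a => f a s) + f (S m) s));
      [intros; now rewrite sum1_S|].
    rewrite sum1_S; apply (is_derive_plus (fun s => sum1 m (fun a => f a s)) (f (S m)));
      [apply IH; intros; apply H|apply H]; lia.
Qed.

Lemma continuity_pt_sum1 (m : nat) (f : nat -> R -> R) (x : R) :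
  (forall a, (1 <= a <= m)%nat -> continuity_pt (f a) x) ->
  continuity_pt (fun s => sum1 m (fun a => f a s)) x.
Proof.
  induction m as [|m IH]; intros H.
  - apply (continuity_pt_ext (fun _ => 0)); [intros; now rewrite sum1_O|].
    apply continuity_pt_const; intros u v; reflexivity.
  - apply (continuity_pt_ext (fun s => sum1 m (fun a => f a s) + f (S m) s));
      [intros; now rewrite sum1_S|].
    apply continuity_pt_plus; [apply IH; intros; apply H|apply H]; lia.
Qed.

Lemma continuity_pt_of_is_derive (f : R -> R) (x l : R) :
  is_derive f x l -> continuity_pt f x.
Proof.
  intros H; apply continuity_pt_filterlim, (ex_derive_continuous f x); now exists l.
Qed.

Lemma is_derive_Rpower_comp (f : R -> R) (x d e : R) :
  0 < f x -> is_derive f x d ->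
  is_derive (fun s => Rpower (f s) e) x (e * d / f x * Rpower (f x) e).
Proof.
  intros Hf Hd. unfold Rpower.
  replace (e * d / f x * exp (e * ln (f x))) with (e * (d * / f x) * exp (e * ln (f x)))
    by (field; lra).
  apply (is_derive_comp exp (fun s => e * ln (f s))); [apply is_derive_exp|].
  apply is_derive_scal, (is_derive_comp ln f); [|exact Hd].
  now apply is_derive_Reals, derivable_pt_lim_ln.
Qed.

Lemma nondecreasing_of_derive_nonneg (f : R -> R) (a b : R) :
  a <= b -> (forall x, a <= x <= b -> continuity_pt f x) ->
  (forall x, a < x < b -> exists l, is_derive f x l /\ 0 <= l) -> f a <= f b.
Proof.
  intros Hab Hc Hd.
  destruct (MVT_gen f a b (fun x => Rmax 0 (Derive f x))) as (c & _ & Hc2).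
  - intros x Hx. rewrite Rmin_left, Rmax_right in Hx by lra.
    destruct (Hd x Hx) as (l & Hl & Hl0).
    now rewrite (is_derive_unique f x l Hl), Rmax_right.
  - intros x Hx. rewrite Rmin_left, Rmax_right in Hx by lra. auto.
  - pose proof (Rmax_l 0 (Derive f c)). nra.
Qed.

(* Solutions are only right-continuous at 0; extending them by their value at 0 to the
   left makes them continuous there, as the mean value and extreme value theorems need. *)
Definition clamp0 (f : R -> R) (s : R) : R := f (Rmax 0 s).

Lemma clamp0_nonneg (f : R -> R) (s : R) : 0 <= s -> clamp0 f s = f s.
Proof. intros; unfold clamp0; now rewrite Rmax_right. Qed.

Lemma is_derive_clamp0 (f : R -> R) (x l : R) :
  0 < x -> is_derive f x l -> is_derive (clamp0 f) x l.
Proof.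
  intros Hx H. apply (is_derive_ext_loc f); [|exact H].
  apply (locally_interval _ x 0 p_infty); [exact Hx|exact I|].
  intros y Hy _. symmetry; apply clamp0_nonneg; simpl in Hy; lra.
Qed.

Lemma continuity_pt_clamp0 (f : R -> R) (s : R) :
  0 <= s -> filterlim f (at_right 0) (locally (f 0)) ->
  (0 < s -> ex_derive f s) -> continuity_pt (clamp0 f) s.
Proof.
  intros Hs Hrc Hd. destruct (Rle_lt_or_eq_dec 0 s Hs) as [Hpos| <-].
  - destruct (Hd Hpos) as [l Hl].
    exact (continuity_pt_of_is_derive _ _ _ (is_derive_clamp0 f s l Hpos Hl)).
  - apply continuity_pt_filterlim. unfold clamp0 at 2. rewrite Rmax_left by lra.
    apply filterlim_locally. intros eps.
    destruct (proj1 (filterlim_locally _ _) Hrc eps) as [del Hdel].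
    exists del. intros y Hy. unfold clamp0. destruct (Rle_or_lt y 0).
    + rewrite Rmax_left by lra. apply ball_center.
    + rewrite Rmax_right by lra. now apply Hdel.
Qed.

Lemma is_derive_prod1 (g : nat -> R -> R) (d : nat -> R) (t : R) (m : nat) :
  (forall a, (1 <= a <= m)%nat -> is_derive (g a) t (d a) /\ g a t <> 0) ->
  is_derive (fun s => prod1 (fun a => g a s) m) t
    (prod1 (fun a => g a t) m * sum1 m (fun a => d a / g a t)).
Proof.
  induction m as [|m IH]; intros H.
  - rewrite sum1_O, Rmult_0_r. exact (is_derive_const 1 t).
  - destruct (H (S m)) as [HdS HgS]; [lia|].
    cbn [prod1]. rewrite sum1_S.
    replace (prod1 (fun a => g a t) m * g (S m) t
             * (sum1 m (fun a => d a / g a t) + d (S m) / g (S m) t))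
      with (prod1 (fun a => g a t) m * sum1 m (fun a => d a / g a t) * g (S m) t
            + prod1 (fun a => g a t) m * d (S m)) by (field; exact HgS).
    apply (is_derive_mult (fun s => prod1 (fun a => g a s) m) (g (S m)));
      [apply IH; intros; apply H; lia|exact HdS|intros; apply Rmult_comm].
Qed.

(** * A Riccati differential inequality *)

Section Riccati.
Variables (Z : R -> R) (K : R).
Hypothesis HK : 0 < K.
Hypothesis HZpos : forall s, 0 <= s -> 0 < Z s.
Hypothesis HZ0 : filterlim Z (at_right 0) (locally (Z 0)).
Hypothesis HZ' : forall s, 0 < s -> exists d, is_derive Z s d /\ - K * Z s ^ 2 <= d.

Lemma continuity_pt_clamp0_Z (s : R) : 0 <= s -> continuity_pt (clamp0 Z) s.
Proof.
  intros Hs. apply continuity_pt_clamp0; [exact Hs|exact HZ0|].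
  intros Hs0. destruct (HZ' s Hs0) as (d & Hd & _). now exists d.
Qed.

(* 1/Z grows at most linearly: (K s - 1/Z s)' = K + Z'/Z^2 >= 0. *)
Lemma riccati_lower_bound (s : R) : 0 <= s -> / (/ Z 0 + K * s) <= Z s.
Proof.
  intros Hs.
  assert (Hm : K * 0 - / clamp0 Z 0 <= K * s - / clamp0 Z s).
  { apply (nondecreasing_of_derive_nonneg (fun r => K * r - / clamp0 Z r)); [exact Hs| |].
    - intros x Hx. apply continuity_pt_minus.
      + apply continuity_pt_mult; [|apply continuity_pt_id].
        apply continuity_pt_const; intros u v; reflexivity.
      + apply continuity_pt_inv; [apply continuity_pt_clamp0_Z; lra|].
        rewrite clamp0_nonneg by lra. apply Rgt_not_eq, HZpos; lra.
    - intros x Hx. destruct (HZ' x ltac:(lra)) as (d & Hd & Hdle).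
      pose proof (HZpos x ltac:(lra)) as Zx.
      exists (K * 1 - - d / clamp0 Z x ^ 2). split.
      + apply (is_derive_minus (fun r => K * r));
          [exact (is_derive_scal (fun r => r) x K 1 (is_derive_id x))|].
        apply is_derive_inv; [apply is_derive_clamp0; [lra|exact Hd]|].
        rewrite clamp0_nonneg by lra. lra.
      + rewrite clamp0_nonneg by lra.
        replace (K * 1 - - d / Z x ^ 2) with ((K * Z x ^ 2 + d) / Z x ^ 2) by (field; lra).
        apply Rmult_le_pos; [lra|]. apply Rlt_le, Rinv_0_lt_compat, pow_lt; lra. }
  rewrite !clamp0_nonneg, Rmult_0_r in Hm by lra.
  pose proof (HZpos s Hs); pose proof (HZpos 0 ltac:(lra)).
  rewrite <- (Rinv_inv (Z s)). apply Rinv_le_contravar; [apply Rinv_0_lt_compat; lra|lra].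
Qed.

Lemma RInt_inv_affine (A t : R) : 0 < A -> 0 <= t ->
  RInt (fun s => / (A + K * s)) 0 t = (ln (A + K * t) - ln A) / K.
Proof.
  intros HA Ht. apply is_RInt_unique.
  replace ((ln (A + K * t) - ln A) / K) with (ln (A + K * t) / K - ln (A + K * 0) / K)
    by (rewrite Rmult_0_r, Rplus_0_r; field; lra).
  apply (is_RInt_derive (fun s => ln (A + K * s) / K) (fun s => / (A + K * s))).
  - intros x Hx. rewrite Rmin_left, Rmax_right in Hx by lra.
    auto_derive; [nra|field; split; nra].
  - intros x Hx. rewrite Rmin_left, Rmax_right in Hx by lra.
    apply (ex_derive_continuous (fun s => / (A + K * s))). auto_derive; nra.
Qed.

Lemma is_lim_RInt_riccati : is_lim (fun t => RInt Z 0 t) p_infty p_infty.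
Proof.
  set (A := / Z 0). assert (HA : 0 < A) by (apply Rinv_0_lt_compat, HZpos; lra).
  apply (is_lim_le_p_loc (fun t => (ln (A + K * t) - ln A) / K)).
  - exists 0. intros t Ht. rewrite <- RInt_inv_affine by lra.
    apply RInt_le; [lra| | |].
    + apply (ex_RInt_continuous (V := R_CompleteNormedModule)). intros x Hx.
      rewrite Rmin_left, Rmax_right in Hx by lra.
      apply (ex_derive_continuous (fun s => / (A + K * s))). auto_derive; nra.
    + apply (ex_RInt_ext (clamp0 Z)); [intros x Hx; apply clamp0_nonneg|].
      * rewrite Rmin_left in Hx by lra. lra.
      * apply (ex_RInt_continuous (V := R_CompleteNormedModule)). intros x Hx.
        rewrite Rmin_left, Rmax_right in Hx by lra.
        apply continuity_pt_filterlim, continuity_pt_clamp0_Z; lra.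
    + intros x Hx. apply riccati_lower_bound; lra.
  - apply is_lim_spec. intros M.
    exists (exp (K * M + ln A) / K). intros t Ht.
    assert (HKt : exp (K * M + ln A) < A + K * t)
      by (apply (Rmult_lt_compat_l K) in Ht; [field_simplify in Ht; lra|exact HK]).
    apply ln_increasing in HKt; [|apply exp_pos]. rewrite ln_exp in HKt.
    apply (Rmult_lt_reg_l K); [exact HK|]. field_simplify; lra.
Qed.

End Riccati.

Definition in_box (N : nat) (m M : R) (y : nat -> R) : Prop :=
  forall b, (1 <= b <= N)%nat -> m <= y b <= M.

Definition dist2 (N : nat) (y w : nat -> R) : R := sum1 N (fun b => (y b - w b) ^ 2).

(* The boxes [m, M]^N stay away from 0 so that coordinates may be inverted; the bound B is
   carried along so that products of such functions are again Lipschitz. *)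
Definition box_lipschitz (N : nat) (f : (nat -> R) -> R) : Prop :=
  forall m M, 0 < m -> exists B L, 0 <= L /\
    forall y w, in_box N m M y -> in_box N m M w ->
      Rabs (f y) <= B /\ (f y - f w) ^ 2 <= L * dist2 N y w.

Lemma dist2_nonneg (N : nat) (y w : nat -> R) : 0 <= dist2 N y w.
Proof. apply sum1_nonneg; intros; apply pow2_ge_0. Qed.

Lemma coord_sq_le_dist2 (N b : nat) (y w : nat -> R) :
  (1 <= b <= N)%nat -> (y b - w b) ^ 2 <= dist2 N y w.
Proof. apply (sum1_term_le N (fun b => (y b - w b) ^ 2)); intros; apply pow2_ge_0. Qed.

Lemma box_lipschitz_ext (N : nat) (f g : (nat -> R) -> R) :
  box_lipschitz N f -> (forall y, f y = g y) -> box_lipschitz N g.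
Proof.
  intros Hf E m M Hm. destruct (Hf m M Hm) as (B & L & HL & H).
  exists B, L; split; auto. intros y w Hy Hw. rewrite <- !E. auto.
Qed.

Lemma box_lipschitz_const (N : nat) (c : R) : box_lipschitz N (fun _ => c).
Proof.
  intros m M Hm. exists (Rabs c), 0. split; [lra|]. intros y w _ _.
  rewrite Rminus_diag, Rmult_0_l. split; [lra|simpl; lra].
Qed.

Lemma box_lipschitz_coord (N b : nat) : (1 <= b <= N)%nat -> box_lipschitz N (fun y => y b).
Proof.
  intros Hb m M Hm. exists (Rabs m + Rabs M), 1. split; [lra|]. intros y w Hy Hw. split.
  - destruct (Hy b Hb). unfold Rabs; repeat destruct Rcase_abs; lra.
  - rewrite Rmult_1_l. now apply coord_sq_le_dist2.
Qed.

Lemma box_lipschitz_inv_coord (N b : nat) :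
  (1 <= b <= N)%nat -> box_lipschitz N (fun y => / y b).
Proof.
  intros Hb m M Hm. exists (/ m), (/ m ^ 4). split.
  { apply Rlt_le, Rinv_0_lt_compat, pow_lt; lra. }
  intros y w Hy Hw. destruct (Hy b Hb), (Hw b Hb). split.
  - rewrite Rabs_pos_eq by (apply Rlt_le, Rinv_0_lt_compat; lra).
    apply Rinv_le_contravar; lra.
  - pose proof (coord_sq_le_dist2 N b y w Hb) as Hq.
    assert (Hr : 0 < / (y b * w b) <= / (m * m)).
    { split; [apply Rinv_0_lt_compat; nra|apply Rinv_le_contravar; nra]. }
    replace ((/ y b - / w b) ^ 2) with ((y b - w b) ^ 2 * (/ (y b * w b)) ^ 2) by (field; lra).
    replace (/ m ^ 4) with ((/ (m * m)) ^ 2) by (field; lra).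
    rewrite Rmult_comm. apply Rmult_le_compat; [apply pow2_ge_0|apply pow2_ge_0| |exact Hq].
    apply pow_incr; lra.
Qed.

Lemma box_lipschitz_plus (N : nat) (f g : (nat -> R) -> R) :
  box_lipschitz N f -> box_lipschitz N g -> box_lipschitz N (fun y => f y + g y).
Proof.
  intros Hf Hg m M Hm.
  destruct (Hf m M Hm) as (B1 & L1 & HL1 & H1), (Hg m M Hm) as (B2 & L2 & HL2 & H2).
  exists (B1 + B2), (2 * L1 + 2 * L2). split; [lra|]. intros y w Hy Hw.
  destruct (H1 y w Hy Hw), (H2 y w Hy Hw). split.
  - eapply Rle_trans; [apply Rabs_triang|lra].
  - pose proof (pow2_ge_0 (f y - f w - (g y - g w))). nra.
Qed.

Lemma box_lipschitz_opp (N : nat) (f : (nat -> R) -> R) :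
  box_lipschitz N f -> box_lipschitz N (fun y => - f y).
Proof.
  intros Hf m M Hm. destruct (Hf m M Hm) as (B & L & HL & H).
  exists B, L. split; auto. intros y w Hy Hw. destruct (H y w Hy Hw).
  rewrite Rabs_Ropp. split; [auto|nra].
Qed.

Lemma box_lipschitz_minus (N : nat) (f g : (nat -> R) -> R) :
  box_lipschitz N f -> box_lipschitz N g -> box_lipschitz N (fun y => f y - g y).
Proof. intros; apply box_lipschitz_plus, box_lipschitz_opp; auto. Qed.

Lemma box_lipschitz_mult (N : nat) (f g : (nat -> R) -> R) :
  box_lipschitz N f -> box_lipschitz N g -> box_lipschitz N (fun y => f y * g y).
Proof.
  intros Hf Hg m M Hm.
  destruct (Hf m M Hm) as (B1 & L1 & HL1 & H1), (Hg m M Hm) as (B2 & L2 & HL2 & H2).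
  exists (B1 * B2), (2 * B1 ^ 2 * L2 + 2 * B2 ^ 2 * L1). split.
  { pose proof (pow2_ge_0 B1); pose proof (pow2_ge_0 B2). nra. }
  intros y w Hy Hw.
  destruct (H1 y w Hy Hw) as [Af Df], (H2 y w Hy Hw) as [Ag Dg], (H2 w y Hw Hy) as [Ag' _].
  split.
  - rewrite Rabs_mult. apply Rmult_le_compat; auto; apply Rabs_pos.
  - pose proof (dist2_nonneg N y w) as Hd.
    assert (Ef : f y ^ 2 <= B1 ^ 2)
      by (rewrite <- pow2_abs; apply pow_incr; split; [apply Rabs_pos|auto]).
    assert (Eg : g w ^ 2 <= B2 ^ 2)
      by (rewrite <- pow2_abs; apply pow_incr; split; [apply Rabs_pos|auto]).
    set (a := f y * (g y - g w)). set (b := g w * (f y - f w)).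
    replace (f y * g y - f w * g w) with (a + b) by (unfold a, b; ring).
    assert (Ha : a ^ 2 <= B1 ^ 2 * (L2 * dist2 N y w)).
    { unfold a; rewrite Rpow_mult_distr. apply Rmult_le_compat; auto using pow2_ge_0. }
    assert (Hb : b ^ 2 <= B2 ^ 2 * (L1 * dist2 N y w)).
    { unfold b; rewrite Rpow_mult_distr. apply Rmult_le_compat; auto using pow2_ge_0. }
    pose proof (pow2_ge_0 (a - b)). nra.
Qed.

Lemma box_lipschitz_sum1 (N k : nat) (h : nat -> (nat -> R) -> R) :
  (forall i, (1 <= i <= k)%nat -> box_lipschitz N (h i)) ->
  box_lipschitz N (fun y => sum1 k (fun i => h i y)).
Proof.
  induction k as [|k IH]; intros H.
  - apply (box_lipschitz_ext N (fun _ => 0)); [apply box_lipschitz_const|].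
    intros y; now rewrite sum1_O.
  - apply (box_lipschitz_ext N (fun y => sum1 k (fun i => h i y) + h (S k) y)).
    + apply box_lipschitz_plus; [apply IH; intros; apply H|apply H]; lia.
    + intros y; now rewrite sum1_S.
Qed.

Lemma box_lipschitz_pow2 (N : nat) (f : (nat -> R) -> R) :
  box_lipschitz N f -> box_lipschitz N (fun y => f y ^ 2).
Proof.
  intros H. apply (box_lipschitz_ext N (fun y => f y * f y)); [now apply box_lipschitz_mult|].
  intros; ring.
Qed.

Lemma box_lipschitz_inv_mult (N i j : nat) :
  (1 <= i <= N)%nat -> (1 <= j <= N)%nat -> box_lipschitz N (fun y => / (y i * y j)).
Proof.
  intros. apply (box_lipschitz_ext N (fun y => / y i * / y j)).
  - apply box_lipschitz_mult; now apply box_lipschitz_inv_coord.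
  - intros; now rewrite Rinv_mult.
Qed.

(** * Uniqueness for ODEs with a locally Lipschitz field *)

Lemma in_box_widen (N : nat) (m M m' M' : R) (y : nat -> R) :
  m' <= m -> M <= M' -> in_box N m M y -> in_box N m' M' y.
Proof. intros Hm HM Hy b Hb. specialize (Hy b Hb). lra. Qed.

Lemma pos_bounds_on_interval (N : nat) (y : nat -> R -> R) (t1 : R) :
  0 <= t1 ->
  (forall a s, (1 <= a <= N)%nat -> 0 <= s <= t1 -> 0 < y a s /\ continuity_pt (y a) s) ->
  exists m M, 0 < m /\ forall s, 0 <= s <= t1 -> in_box N m M (fun b => y b s).
Proof.
  intros Ht. induction N as [|N IH]; intros H.
  { exists 1, 1. split; [lra|]. intros s _ b Hb; lia. }
  destruct IH as (m & M & Hm & HN); [intros; apply H; auto; lia|].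
  assert (Hc : forall s, 0 <= s <= t1 -> continuity_pt (y (S N)) s) by (intros; apply H; auto; lia).
  destruct (continuity_ab_min _ 0 t1 Ht Hc) as (smin & Hmin & Hsmin).
  destruct (continuity_ab_maj _ 0 t1 Ht Hc) as (smax & Hmax & _).
  assert (Hpos : 0 < y (S N) smin) by (apply H; auto; lia).
  exists (Rmin m (y (S N) smin)), (Rmax M (y (S N) smax)). split; [now apply Rmin_pos|].
  intros s Hs b Hb. destruct (Nat.eq_dec b (S N)) as [->|Hne].
  - specialize (Hmin s Hs); specialize (Hmax s Hs).
    pose proof (Rmin_r m (y (S N) smin)); pose proof (Rmax_r M (y (S N) smax)). lra.
  - specialize (HN s Hs b ltac:(lia)).
    pose proof (Rmin_l m (y (S N) smin)); pose proof (Rmax_l M (y (S N) smax)). lra.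
Qed.

Lemma common_bound_upto (P : nat -> R -> Prop) (N : nat) :
  (forall b L L', P b L -> L <= L' -> P b L') ->
  (forall b, (1 <= b <= N)%nat -> exists L, 0 <= L /\ P b L) ->
  exists L, 0 <= L /\ forall b, (1 <= b <= N)%nat -> P b L.
Proof.
  intros Hmono. induction N as [|N IH]; intros H.
  - exists 0; split; [lra|]; intros; lia.
  - destruct IH as (L & HL & HN); [intros; apply H; lia|].
    destruct (H (S N)) as (L1 & HL1 & H1); [lia|].
    exists (L + L1). split; [lra|]. intros b Hb. destruct (Nat.eq_dec b (S N)) as [->|Hne].
    + eapply Hmono; [exact H1|lra].
    + eapply Hmono; [apply HN; lia|lra].
Qed.

Lemma gronwall_zero (V : R -> R) (K t1 : R) :
  0 <= t1 -> (forall s, 0 <= s <= t1 -> continuity_pt V s) ->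
  (forall s, 0 < s < t1 -> exists d, is_derive V s d /\ d <= K * V s) ->
  V 0 = 0 -> V t1 <= 0.
Proof.
  intros Ht Hc Hd H0.
  assert (HE : forall x, is_derive (fun s => exp (- K * s)) x (- K * exp (- K * x)))
    by (intros; auto_derive; [auto|ring]).
  assert (Hmono : - (V 0 * exp (- K * 0)) <= - (V t1 * exp (- K * t1))).
  { apply (nondecreasing_of_derive_nonneg (fun s => - (V s * exp (- K * s)))); [lra| |].
    - intros x Hx. apply continuity_pt_opp, continuity_pt_mult; [auto|].
      exact (continuity_pt_of_is_derive _ _ _ (HE x)).
    - intros x Hx. destruct (Hd x Hx) as (d & HdV & Hle).
      exists (- (d * exp (- K * x) + V x * (- K * exp (- K * x)))). split.
      + apply (is_derive_opp (fun s => V s * exp (- K * s))).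
        apply (is_derive_mult V (fun s => exp (- K * s))); auto. intros; apply Rmult_comm.
      + pose proof (exp_pos (- K * x)). nra. }
  rewrite H0 in Hmono. pose proof (exp_pos (- K * t1)). nra.
Qed.

Lemma box_lipschitz_family (N : nat) (F : nat -> (nat -> R) -> R) (m M : R) :
  0 < m -> (forall a, (1 <= a <= N)%nat -> box_lipschitz N (F a)) ->
  exists L, 0 <= L /\ forall a u v, (1 <= a <= N)%nat -> in_box N m M u -> in_box N m M v ->
    (F a u - F a v) ^ 2 <= L * dist2 N u v.
Proof.
  intros Hm HF.
  destruct (common_bound_upto (fun a L => forall u v, in_box N m M u -> in_box N m M v ->
     (F a u - F a v) ^ 2 <= L * dist2 N u v) N) as (L & HL & HLa).
  - intros a L L' HP HLL u v Hu Hv. eapply Rle_trans; [apply HP; auto|].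
    apply Rmult_le_compat_r; [apply dist2_nonneg|exact HLL].
  - intros a Ha. destruct (HF a Ha m M Hm) as (B & L & HL & H).
    exists L; split; [exact HL|]. intros; apply H; auto.
  - exists L; split; [exact HL|]. intros; now apply HLa.
Qed.

Lemma is_derive_dist2_le (N : nat) (F : nat -> (nat -> R) -> R) (y w : nat -> R -> R) (x L : R) :
  (forall a, (1 <= a <= N)%nat ->
     (F a (fun b => y b x) - F a (fun b => w b x)) ^ 2
     <= L * dist2 N (fun b => y b x) (fun b => w b x)) ->
  (forall a, (1 <= a <= N)%nat ->
     is_derive (y a) x (F a (fun b => y b x)) /\ is_derive (w a) x (F a (fun b => w b x))) ->
  exists d, is_derive (fun s => dist2 N (fun b => y b s) (fun b => w b s)) x d /\
    d <= (1 + INR N * L) * dist2 N (fun b => y b x) (fun b => w b x).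
Proof.
  intros HL Hd.
  set (V := dist2 N (fun b => y b x) (fun b => w b x)).
  set (D := fun a => F a (fun b => y b x) - F a (fun b => w b x)).
  exists (sum1 N (fun a => INR 2 * D a * (y a x - w a x) ^ 1)). split.
  - apply (is_derive_sum1 N (fun a s => (y a s - w a s) ^ 2)). intros a Ha.
    apply (is_derive_pow (fun s => y a s - w a s)), (is_derive_minus (y a) (w a));
      apply Hd; exact Ha.
  - (* 2 u D <= u^2 + D^2 <= u^2 + L V *)
    apply Rle_trans with (sum1 N (fun a => (y a x - w a x) ^ 2 + L * V)).
    + apply sum1_le. intros a Ha. assert (HDa : D a ^ 2 <= L * V) by exact (HL a Ha).
      pose proof (pow2_ge_0 (y a x - w a x - D a)). simpl. nra.
    + rewrite sum1_plus, sum1_const. unfold V, dist2. lra.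
Qed.

Lemma ode_unique_pos (N : nat) (F : nat -> (nat -> R) -> R) (y w : nat -> R -> R) (t1 : R) :
  0 < t1 ->
  (forall a, (1 <= a <= N)%nat -> box_lipschitz N (F a)) ->
  (forall a s, (1 <= a <= N)%nat -> 0 <= s <= t1 ->
     (0 < y a s /\ continuity_pt (y a) s) /\ (0 < w a s /\ continuity_pt (w a) s)) ->
  (forall a s, (1 <= a <= N)%nat -> 0 < s < t1 ->
     is_derive (y a) s (F a (fun b => y b s)) /\ is_derive (w a) s (F a (fun b => w b s))) ->
  (forall a, (1 <= a <= N)%nat -> y a 0 = w a 0) ->
  forall a, (1 <= a <= N)%nat -> y a t1 = w a t1.
Proof.
  intros Ht HF Hpc Hd H0.
  destruct (pos_bounds_on_interval N y t1) as (my & My & Hmy & Hy); [lra|apply Hpc|].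
  destruct (pos_bounds_on_interval N w t1) as (mw & Mw & Hmw & Hw); [lra|apply Hpc|].
  destruct (box_lipschitz_family N F (Rmin my mw) (Rmax My Mw)) as (L & HL & HLa);
    [now apply Rmin_pos|exact HF|].
  set (V := fun s => dist2 N (fun b => y b s) (fun b => w b s)).
  assert (HV : V t1 <= 0).
  { apply (gronwall_zero V (1 + INR N * L) t1); [lra| | |].
    - intros s Hs. apply (continuity_pt_sum1 N (fun b s => (y b s - w b s) ^ 2)).
      intros b Hb. apply (continuity_pt_ext (fun s => (y b s - w b s) * (y b s - w b s)));
        [intros; ring|].
      apply continuity_pt_mult; apply continuity_pt_minus; apply Hpc; auto.
    - intros x Hx. apply (is_derive_dist2_le N F y w x L); [|intros; apply Hd; auto].
      intros a Ha. apply HLa; [exact Ha| |].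
      + apply (in_box_widen N my My); [apply Rmin_l|apply Rmax_l|apply Hy; lra].
      + apply (in_box_widen N mw Mw); [apply Rmin_r|apply Rmax_r|apply Hw; lra].
    - unfold V, dist2. transitivity (sum1 N (fun _ => 0)); [|rewrite sum1_const; ring].
      apply sum1_ext. intros b Hb. rewrite H0 by auto. ring. }
  intros a Ha. pose proof (coord_sq_le_dist2 N a (fun b => y b t1) (fun b => w b t1) Ha).
  pose proof (pow2_ge_0 (y a t1 - w a t1)). unfold V in HV. nra.
Qed.

(* A state y (with y b standing for g_b) is fed to the Sigma's of the statement as a constant
   path: sig n k y is Sigma_k and sigp n y is Sigma'. *)
Definition const_path (y : nat -> R) : nat -> R -> R := fun b _ => y b.

Definition sig (n k : nat) (y : nat -> R) : R :=
  match k with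
  | 1%nat => Sigma1 n (const_path y) 0
  | 2%nat => Sigma2 n (const_path y) 0
  | _ => Sigma3 n (const_path y) 0
  end.

Definition sigp (n : nat) (y : nat -> R) : R := Sigmap n (const_path y) 0.

Lemma sigp_eq (n : nat) (y : nat -> R) :
  sigp n y = y (4 * n + 1)%nat * sig n 1 y + y (4 * n + 2)%nat * sig n 2 y
             + y (4 * n + 3)%nat * sig n 3 y.
Proof. reflexivity. Qed.

Definition qn_field (n : nat) (rho : R) (a : nat) (y : nat -> R) : R :=
  let Z k := y (4 * n + k)%nat in
  let S' := sigp n y in
  if (a <=? n)%nat then
    Z 1%nat / y (n + a)%nat + Z 3%nat / y (2 * n + a)%nat + Z 2%nat / y (3 * n + a)%nat
    - rho * y a * S'
  else if (a <=? 2 * n)%nat then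
    let i := (a - n)%nat in
    Z 1%nat / y i + Z 2%nat / y (2 * n + i)%nat + Z 3%nat / y (3 * n + i)%nat - rho * y a * S'
  else if (a <=? 3 * n)%nat then
    let i := (a - 2 * n)%nat in
    Z 3%nat / y i + Z 2%nat / y (n + i)%nat + Z 1%nat / y (3 * n + i)%nat - rho * y a * S'
  else if (a <=? 4 * n)%nat then
    let i := (a - 3 * n)%nat in
    Z 2%nat / y i + Z 3%nat / y (n + i)%nat + Z 1%nat / y (2 * n + i)%nat - rho * y a * S'
  else - y a ^ 2 * sig n (a - 4 * n) y - rho * y a * S'.

Ltac decide_branches :=
  repeat match goal with
  | |- context [(?a <=? ?b)%nat] =>
      first [rewrite (proj2 (Nat.leb_le a b)) by lia | rewrite (proj2 (Nat.leb_gt a b)) by lia]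
  end.

Section QnField.
Variables (n : nat) (rho : R) (y : nat -> R).

Lemma qn_field_X1 (i : nat) : (1 <= i <= n)%nat ->
  qn_field n rho i y = y (4 * n + 1)%nat / y (n + i)%nat + y (4 * n + 3)%nat / y (2 * n + i)%nat
                       + y (4 * n + 2)%nat / y (3 * n + i)%nat - rho * y i * sigp n y.
Proof. intros; unfold qn_field; decide_branches; reflexivity. Qed.

Lemma qn_field_X2 (i : nat) : (1 <= i <= n)%nat ->
  qn_field n rho (n + i) y = y (4 * n + 1)%nat / y i + y (4 * n + 2)%nat / y (2 * n + i)%nat
                       + y (4 * n + 3)%nat / y (3 * n + i)%nat - rho * y (n + i)%nat * sigp n y.
Proof.
  intros; unfold qn_field; decide_branches. now replace (n + i - n)%nat with i by lia.
Qed.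

Lemma qn_field_X3 (i : nat) : (1 <= i <= n)%nat ->
  qn_field n rho (2 * n + i) y = y (4 * n + 3)%nat / y i + y (4 * n + 2)%nat / y (n + i)%nat
                       + y (4 * n + 1)%nat / y (3 * n + i)%nat - rho * y (2 * n + i)%nat * sigp n y.
Proof.
  intros; unfold qn_field; decide_branches. now replace (2 * n + i - 2 * n)%nat with i by lia.
Qed.

Lemma qn_field_X4 (i : nat) : (1 <= i <= n)%nat ->
  qn_field n rho (3 * n + i) y = y (4 * n + 2)%nat / y i + y (4 * n + 3)%nat / y (n + i)%nat
                       + y (4 * n + 1)%nat / y (2 * n + i)%nat - rho * y (3 * n + i)%nat * sigp n y.
Proof.
  intros; unfold qn_field; decide_branches. now replace (3 * n + i - 3 * n)%nat with i by lia.
Qed.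

Lemma qn_field_Z (k : nat) : (1 <= k <= 3)%nat ->
  qn_field n rho (4 * n + k) y
  = - y (4 * n + k)%nat ^ 2 * sig n k y - rho * y (4 * n + k)%nat * sigp n y.
Proof.
  intros; unfold qn_field; decide_branches. now replace (4 * n + k - 4 * n)%nat with k by lia.
Qed.

End QnField.

Lemma qn_index_cases (n a : nat) : (1 <= a <= 4 * n + 3)%nat ->
  (1 <= a <= n)%nat \/
  (exists i, (1 <= i <= n)%nat /\ a = (n + i)%nat) \/
  (exists i, (1 <= i <= n)%nat /\ a = (2 * n + i)%nat) \/
  (exists i, (1 <= i <= n)%nat /\ a = (3 * n + i)%nat) \/
  (exists k, (1 <= k <= 3)%nat /\ a = (4 * n + k)%nat).
Proof.
  intros H.
  destruct (Nat.le_gt_cases a n); [left; lia|right].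
  destruct (Nat.le_gt_cases a (2 * n)); [left; exists (a - n)%nat; lia|right].
  destruct (Nat.le_gt_cases a (3 * n)); [left; exists (a - 2 * n)%nat; lia|right].
  destruct (Nat.le_gt_cases a (4 * n)); [left; exists (a - 3 * n)%nat; lia|right].
  exists (a - 4 * n)%nat; lia.
Qed.

Lemma qn_ode_is_derive (n : nat) (rho : R) (g : nat -> R -> R) (t : R) :
  QnRB_ODE n rho g t -> forall a, (1 <= a <= 4 * n + 3)%nat ->
  is_derive (g a) t (qn_field n rho a (fun b => g b t)).
Proof.
  intros (HX & HZ1 & HZ2 & HZ3) a Ha.
  destruct (qn_index_cases n a Ha)
    as [Hi|[(i & Hi & ->)|[(i & Hi & ->)|[(i & Hi & ->)|(k & Hk & ->)]]]].
  - rewrite qn_field_X1 by exact Hi. apply (HX a Hi).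
  - rewrite qn_field_X2 by exact Hi. apply (HX i Hi).
  - rewrite qn_field_X3 by exact Hi. apply (HX i Hi).
  - rewrite qn_field_X4 by exact Hi. apply (HX i Hi).
  - rewrite qn_field_Z by exact Hk.
    assert (k = 1 \/ k = 2 \/ k = 3)%nat as [->|[->| ->]] by lia; assumption.
Qed.

Lemma qn_solution_clamp0 (n : nat) (rho : R) (T : Rbar) (g : nat -> R -> R) (b : nat) (s : R) :
  QnRB_solution n rho T g -> (1 <= b <= 4 * n + 3)%nat -> 0 <= s -> Rbar_lt s T ->
  0 < clamp0 (g b) s /\ continuity_pt (clamp0 (g b)) s /\
  (0 < s -> is_derive (clamp0 (g b)) s (qn_field n rho b (fun d => clamp0 (g d) s))).
Proof.
  intros (Hpos & Hrc & Hode) Hb Hs HsT.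
  assert (HD : 0 < s -> is_derive (g b) s (qn_field n rho b (fun d => g d s)))
    by (intros Hs0; now apply qn_ode_is_derive; [apply Hode|]).
  replace (fun d => clamp0 (g d) s) with (fun d => g d s)
    by (unfold clamp0; now rewrite Rmax_right).
  split; [|split].
  - rewrite clamp0_nonneg by exact Hs. now apply Hpos.
  - apply continuity_pt_clamp0; [exact Hs|apply Hrc; exact Hb|].
    intros Hs0; eexists; now apply HD.
  - intros Hs0. apply is_derive_clamp0; [exact Hs0|now apply HD].
Qed.

Lemma box_lipschitz_sig (n k : nat) : box_lipschitz (4 * n + 3) (sig n k).
Proof.
  unfold sig; destruct k as [|[|[|k]]]; cbv [Sigma1 Sigma2 Sigma3 const_path];
    apply box_lipschitz_sum1; intros i Hi;
    apply box_lipschitz_plus; apply box_lipschitz_inv_mult; lia.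
Qed.

Lemma box_lipschitz_sigp (n : nat) : box_lipschitz (4 * n + 3) (sigp n).
Proof.
  apply (box_lipschitz_ext _ (fun y => y (4 * n + 1)%nat * sig n 1 y
    + y (4 * n + 2)%nat * sig n 2 y + y (4 * n + 3)%nat * sig n 3 y));
    [|intros; symmetry; apply sigp_eq].
  repeat apply box_lipschitz_plus; apply box_lipschitz_mult;
    (apply box_lipschitz_sig || (apply box_lipschitz_coord; lia)).
Qed.

Ltac box_lipschitz_tac :=
  repeat first
    [ apply box_lipschitz_sig | apply box_lipschitz_sigp
    | apply box_lipschitz_const | apply box_lipschitz_plus | apply box_lipschitz_minus
    | apply box_lipschitz_mult | apply box_lipschitz_opp | apply box_lipschitz_pow2
    | apply box_lipschitz_coord; lia | apply box_lipschitz_inv_coord; lia ].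

Lemma box_lipschitz_qn_field (n : nat) (rho : R) (a : nat) :
  (1 <= a <= 4 * n + 3)%nat -> box_lipschitz (4 * n + 3) (qn_field n rho a).
Proof.
  intros Ha.
  destruct (qn_index_cases n a Ha)
    as [Hi|[(i & Hi & ->)|[(i & Hi & ->)|[(i & Hi & ->)|(k & Hk & ->)]]]];
    (eapply box_lipschitz_ext; [|intros y; symmetry;
       first [ apply qn_field_X1; assumption | apply qn_field_X2; assumption
             | apply qn_field_X3; assumption | apply qn_field_X4; assumption
             | apply qn_field_Z; assumption ]]);
    unfold Rdiv; box_lipschitz_tac.
Qed.

(** * (a) The conserved quantity *)

Section LogDerivatives.
Variables (n : nat) (rho : R) (y : nat -> R).
Hypothesis Hy : forall b, (1 <= b <= 4 * n + 3)%nat -> 0 < y b.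

Lemma sum_X_log_derivatives :
  sum1 (4 * n) (fun a => qn_field n rho a y / y a) = (2 - 4 * INR n * rho) * sigp n y.
Proof.
  set (Z k := y (4 * n + k)%nat).
  rewrite sum1_four_blocks.
  transitivity (sum1 n (fun i =>
      2 * Z 1%nat * (/ (y i * y (n + i)%nat) + / (y (2 * n + i)%nat * y (3 * n + i)%nat))
    + 2 * Z 2%nat * (/ (y i * y (3 * n + i)%nat) + / (y (n + i)%nat * y (2 * n + i)%nat))
    + 2 * Z 3%nat * (/ (y i * y (2 * n + i)%nat) + / (y (n + i)%nat * y (3 * n + i)%nat))
    + -4 * rho * sigp n y)).
  - apply sum1_ext. intros i Hi.
    rewrite qn_field_X1, qn_field_X2, qn_field_X3, qn_field_X4 by exact Hi.
    assert (y i <> 0) by (apply Rgt_not_eq, Hy; lia).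
    assert (y (n + i)%nat <> 0) by (apply Rgt_not_eq, Hy; lia).
    assert (y (2 * n + i)%nat <> 0) by (apply Rgt_not_eq, Hy; lia).
    assert (y (3 * n + i)%nat <> 0) by (apply Rgt_not_eq, Hy; lia).
    unfold Z; field; auto.
  - rewrite !sum1_plus, (sum1_scal_l n (2 * Z 1%nat)), (sum1_scal_l n (2 * Z 2%nat)),
      (sum1_scal_l n (2 * Z 3%nat)), sum1_const, (sigp_eq n y).
    cbv [sig Sigma1 Sigma2 Sigma3 const_path]. unfold Z. ring.
Qed.

Lemma sum_Z_log_derivatives :
  sum1 3 (fun k => qn_field n rho (4 * n + k) y / y (4 * n + k)%nat) = - (1 + 3 * rho) * sigp n y.
Proof.
  rewrite !sum1_S, sum1_O, !qn_field_Z, sigp_eq by lia.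
  assert (y (4 * n + 1)%nat <> 0) by (apply Rgt_not_eq, Hy; lia).
  assert (y (4 * n + 2)%nat <> 0) by (apply Rgt_not_eq, Hy; lia).
  assert (y (4 * n + 3)%nat <> 0) by (apply Rgt_not_eq, Hy; lia).
  field; auto.
Qed.

End LogDerivatives.

Lemma qn_invariant_is_derive (n : nat) (rho : R) (T : Rbar) (g : nat -> R -> R) (t : R) :
  QnRB_solution n rho T g -> 1 + 3 * rho <> 0 -> 0 < t -> Rbar_lt t T ->
  is_derive (QnRB_invariant n rho g) t 0.
Proof.
  intros (Hpos & _ & Hode) Hr Ht HtT.
  set (y := fun b => g b t).
  assert (Hy : forall b, (1 <= b <= 4 * n + 3)%nat -> 0 < y b) by (intros; apply Hpos; auto; lra).
  assert (HD := qn_ode_is_derive n rho g t (Hode t Ht HtT)).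
  set (e := 2 * (1 - 2 * INR n * rho) / (1 + 3 * rho)).
  set (P := fun s => prod1 (fun a => g a s) (4 * n)).
  set (Pi := fun s => prod1 (fun k => g (4 * n + k)%nat s) 3).
  assert (HPi0 : 0 < Pi t)
    by (unfold Pi; cbn [prod1]; rewrite Rmult_1_l; repeat apply Rmult_lt_0_compat; apply Hy; lia).
  assert (HP : is_derive P t (P t * ((2 - 4 * INR n * rho) * sigp n y))).
  { rewrite <- (sum_X_log_derivatives n rho y Hy). apply is_derive_prod1.
    intros a Ha. split; [apply HD; lia|apply Rgt_not_eq, Hy; lia]. }
  assert (HPi : is_derive Pi t (Pi t * (- (1 + 3 * rho) * sigp n y))).
  { rewrite <- (sum_Z_log_derivatives n rho y Hy).
    apply (is_derive_prod1 (fun k => g (4 * n + k)%nat)).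
    intros k Hk. split; [apply HD; lia|apply Rgt_not_eq, Hy; lia]. }
  apply (is_derive_ext (fun s => P s * Rpower (Pi s) e)).
  { intros s. unfold QnRB_invariant, P, Pi. cbn [prod1]. now rewrite !Rmult_1_l. }
  replace 0 with ((P t * ((2 - 4 * INR n * rho) * sigp n y)) * Rpower (Pi t) e
                  + P t * (e * (Pi t * (- (1 + 3 * rho) * sigp n y)) / Pi t * Rpower (Pi t) e))
    by (unfold e; field; lra).
  apply (is_derive_mult P (fun s => Rpower (Pi s) e)); [exact HP| |intros; apply Rmult_comm].
  now apply is_derive_Rpower_comp.
Qed.

(** * (b) Divergence of the integrals of the central components *)

Section SigmaBounds.
Variables (n : nat) (y : nat -> R).
Hypothesis Hy : forall b, (1 <= b <= 4 * n)%nat -> 0 < y b.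

Lemma sig_nonneg (k : nat) : 0 <= sig n k y.
Proof.
  unfold sig; destruct k as [|[|[|k]]]; cbv [Sigma1 Sigma2 Sigma3 const_path];
    apply sum1_nonneg; intros i Hi;
    apply Rplus_le_le_0_compat; apply Rlt_le, Rinv_0_lt_compat, Rmult_lt_0_compat;
    apply Hy; lia.
Qed.

Lemma sig_antitone (k : nat) (w : nat -> R) :
  (forall b, (1 <= b <= 4 * n)%nat -> y b <= w b) -> sig n k w <= sig n k y.
Proof.
  intros Hw. assert (H : forall b c, (1 <= b <= 4 * n)%nat -> (1 <= c <= 4 * n)%nat ->
    / (w b * w c) <= / (y b * y c)).
  { intros b c Hb Hc. pose proof (Hy b Hb); pose proof (Hy c Hc).
    pose proof (Hw b Hb); pose proof (Hw c Hc).
    apply Rinv_le_contravar; [apply Rmult_lt_0_compat|apply Rmult_le_compat]; lra. }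
  unfold sig; destruct k as [|[|[|k]]]; cbv [Sigma1 Sigma2 Sigma3 const_path];
    apply sum1_le; intros i Hi; apply Rplus_le_compat; apply H; lia.
Qed.

End SigmaBounds.

Lemma Z_sig_le_sigp (n k : nat) (y : nat -> R) :
  (forall b, (1 <= b <= 4 * n + 3)%nat -> 0 < y b) -> (1 <= k <= 3)%nat ->
  y (4 * n + k)%nat * sig n k y <= sigp n y.
Proof.
  intros Hy Hk.
  assert (H : forall j, (1 <= j <= 3)%nat -> 0 <= y (4 * n + j)%nat * sig n j y).
  { intros j Hj. apply Rmult_le_pos; [apply Rlt_le, Hy; lia|].
    apply sig_nonneg; intros; apply Hy; lia. }
  pose proof (H 1%nat ltac:(lia)); pose proof (H 2%nat ltac:(lia)); pose proof (H 3%nat ltac:(lia)).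
  rewrite sigp_eq. assert (k = 1 \/ k = 2 \/ k = 3)%nat as [->|[->| ->]] by lia; lra.
Qed.

Lemma qn_field_X_nonneg (n : nat) (rho : R) (y : nat -> R) (a : nat) :
  rho <= 0 -> (forall b, (1 <= b <= 4 * n + 3)%nat -> 0 < y b) -> (1 <= a <= 4 * n)%nat ->
  0 <= qn_field n rho a y.
Proof.
  intros Hr Hy Ha.
  assert (HS : 0 <= sigp n y).
  { eapply Rle_trans; [|apply (Z_sig_le_sigp n 1 y Hy); lia].
    apply Rmult_le_pos; [apply Rlt_le, Hy; lia|apply sig_nonneg; intros; apply Hy; lia]. }
  assert (Hrho : forall b, (1 <= b <= 4 * n + 3)%nat -> 0 <= - (rho * y b * sigp n y)).
  { intros b Hb. pose proof (Hy b Hb). rewrite Ropp_mult_distr_l, Ropp_mult_distr_l.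
    apply Rmult_le_pos; [apply Rmult_le_pos|]; lra. }
  destruct (qn_index_cases n a ltac:(lia))
    as [Hi|[(i & Hi & ->)|[(i & Hi & ->)|[(i & Hi & ->)|(k & Hk & ->)]]]]; [| | | |lia];
    [rewrite qn_field_X1 | rewrite qn_field_X2 | rewrite qn_field_X3 | rewrite qn_field_X4];
    try exact Hi; repeat apply Rplus_le_le_0_compat;
    first [apply Hrho; lia | apply Rlt_le, Rdiv_lt_0_compat; apply Hy; lia].
Qed.

Lemma qn_X_nondecreasing (n : nat) (rho : R) (T : Rbar) (g : nat -> R -> R) (b : nat) (s : R) :
  QnRB_solution n rho T g -> rho <= 0 -> (1 <= b <= 4 * n)%nat -> 0 <= s -> Rbar_lt s T ->
  g b 0 <= g b s.
Proof.
  intros Hsol Hr Hb Hs HsT.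
  assert (HxT : forall x, 0 <= x <= s -> Rbar_lt x T)
    by (intros x Hx; apply (Rbar_le_lt_trans x s T); [simpl; lra|exact HsT]).
  rewrite <- (clamp0_nonneg (g b) 0), <- (clamp0_nonneg (g b) s) by lra.
  apply nondecreasing_of_derive_nonneg; [exact Hs| |].
  - intros x Hx. apply (qn_solution_clamp0 n rho T g b x Hsol); [lia|lra|now apply HxT].
  - intros x Hx. eexists; split.
    + apply (qn_solution_clamp0 n rho T g b x Hsol); [lia|lra|apply HxT; lra|lra].
    + apply qn_field_X_nonneg; [exact Hr| |exact Hb].
      intros d Hd. apply (qn_solution_clamp0 n rho T g d x Hsol); [exact Hd|lra|apply HxT; lra].
Qed.

Lemma qn_RInt_Z_diverges (n : nat) (rho : R) (g : nat -> R -> R) (k : nat) :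
  QnRB_solution n rho p_infty g -> rho < 0 -> (1 <= k <= 3)%nat ->
  is_lim (fun t => RInt (g (4 * n + k)%nat) 0 t) p_infty p_infty.
Proof.
  intros Hsol Hr Hk. pose proof Hsol as (Hpos & Hrc & Hode).
  assert (Hy : forall s b, 0 <= s -> (1 <= b <= 4 * n + 3)%nat -> 0 < g b s)
    by (intros; apply Hpos; auto; exact I).
  set (C := sig n k (fun b => g b 0)).
  assert (HC : 0 <= C) by (apply sig_nonneg; intros; apply Hy; [lra|lia]).
  apply (is_lim_RInt_riccati _ (Rabs (1 + rho) * C + 1));
    [pose proof (Rabs_pos (1 + rho)); nra|intros; apply Hy; [lra|lia]|apply Hrc; lia|].
  intros s Hs. set (y := fun b => g b s).
  exists (qn_field n rho (4 * n + k) y). split.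
  { apply qn_ode_is_derive; [apply Hode; [exact Hs|exact I]|lia]. }
  rewrite qn_field_Z by exact Hk.
  set (Z := y (4 * n + k)%nat). change (g (4 * n + k)%nat s) with Z. set (sk := sig n k y).
  assert (HZ : 0 < Z) by (apply Hy; [lra|lia]).
  assert (Hsk : 0 <= sk <= C).
  { split; [apply sig_nonneg; intros; apply Hy; [lra|lia]|].
    apply sig_antitone; [intros; apply Hy; [lra|lia]|].
    intros b Hb. apply (qn_X_nondecreasing n rho p_infty); auto; [lra|lra|exact I]. }
  assert (HZs : Z * sk <= sigp n y)
    by (apply Z_sig_le_sigp; [intros; apply Hy; [lra|lia]|exact Hk]).
  (* -rho Z sigp >= -rho Z^2 sk, so the right-hand side is at least -(1 + rho) sk Z^2 *)
  assert (H1 : - rho * Z * (Z * sk) <= - rho * Z * sigp n y)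
    by (apply Rmult_le_compat_l; [nra|exact HZs]).
  assert (H2 : (1 + rho) * sk <= Rabs (1 + rho) * C).
  { apply Rle_trans with (Rabs (1 + rho) * sk).
    - apply Rmult_le_compat_r; [lra|apply Rle_abs].
    - apply Rmult_le_compat_l; [apply Rabs_pos|lra]. }
  assert (H3 : (1 + rho) * sk * Z ^ 2 <= Rabs (1 + rho) * C * Z ^ 2)
    by (apply Rmult_le_compat_r; [apply pow2_ge_0|exact H2]).
  pose proof (pow2_ge_0 Z). nra.
Qed.

(** * (c) The symmetric solution *)

Lemma Rpower_1_l (p : R) : Rpower 1 p = 1.
Proof. unfold Rpower; now rewrite ln_1, Rmult_0_r, exp_0. Qed.

Lemma sig_const_X (n k : nat) (y : nat -> R) (X : R) :
  (forall b, (1 <= b <= 4 * n)%nat -> y b = X) -> sig n k y = INR n * (2 * / (X * X)).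
Proof.
  intros H. rewrite <- sum1_const.
  unfold sig; destruct k as [|[|[|k]]]; cbv [Sigma1 Sigma2 Sigma3 const_path];
    apply sum1_ext; intros i Hi; rewrite !H by lia; ring.
Qed.

Definition qn_sym_solution (n : nat) (X0 Z0 c pX pZ : R) (b : nat) (s : R) : R :=
  if (b <=? 4 * n)%nat then X0 * Rpower (1 + c * s) pX else Z0 * Rpower (1 + c * s) pZ.

Section SymmetricSolution.
Variables (n : nat) (rho X0 Z0 : R).
Hypothesis HX0 : 0 < X0.
Hypothesis HZ0 : 0 < Z0.
Let D := 6 + 2 * INR n - 6 * INR n * rho.
Hypothesis HD : D <> 0.
Let c := Z0 / X0 ^ 2 * D.
Let pX := 3 * (1 - 2 * INR n * rho) / D.
Let pZ := - INR n * (1 + 3 * rho) / (3 + INR n - 3 * INR n * rho).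
Let sol := qn_sym_solution n X0 Z0 c pX pZ.

Lemma qn_sym_solution_0 (a : nat) : sol a 0 = if (a <=? 4 * n)%nat then X0 else Z0.
Proof.
  unfold sol, qn_sym_solution. rewrite Rmult_0_r, Rplus_0_r, !Rpower_1_l, !Rmult_1_r.
  reflexivity.
Qed.

Lemma qn_sym_exponent_Z : pZ = - (2 * INR n * (1 + 3 * rho)) / D.
Proof.
  assert (3 + INR n - 3 * INR n * rho <> 0) by (intros E; apply HD; unfold D; lra).
  unfold pZ, D in *; field; auto.
Qed.

(* The exponents satisfy pZ = 2 pX - 1. *)
Lemma qn_sym_power_Z (u : R) : 0 < u -> Rpower u pZ = Rpower u pX * Rpower u pX * / u.
Proof.
  intros Hu. replace pZ with (pX + pX + Ropp 1)
    by (rewrite qn_sym_exponent_Z; unfold pX, D in *; field; exact HD).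
  now rewrite !Rpower_plus, Rpower_Ropp, Rpower_1.
Qed.

Lemma is_derive_qn_sym_solution (s : R) : 0 < 1 + c * s ->
  forall a, (1 <= a <= 4 * n + 3)%nat -> is_derive (sol a) s (qn_field n rho a (fun b => sol b s)).
Proof.
  intros Hu a Ha.
  set (u := 1 + c * s) in *. set (P := Rpower u pX). set (Q := Rpower u pZ).
  assert (HP : 0 < P) by apply exp_pos.
  assert (HQ : Q = P * P * / u) by exact (qn_sym_power_Z u Hu).
  set (y := fun b => sol b s).
  assert (HyX : forall b, (b <= 4 * n)%nat -> y b = X0 * P)
    by (intros b Hb; unfold y, sol, qn_sym_solution; now decide_branches).
  assert (HyZ : forall b, (4 * n < b)%nat -> y b = Z0 * Q)
    by (intros b Hb; unfold y, sol, qn_sym_solution; now decide_branches).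
  assert (Hsig : forall k, sig n k y = INR n * (2 * / (X0 * P * (X0 * P))))
    by (intros; apply sig_const_X; intros; apply HyX; lia).
  assert (HS : sigp n y = 3 * Z0 * Q * (INR n * (2 * / (X0 * P * (X0 * P)))))
    by (rewrite sigp_eq, !Hsig, !HyZ by lia; ring).
  assert (Hderiv : forall A p, is_derive (fun r => A * Rpower (1 + c * r) p) s
                                          (A * (p * c / u * Rpower u p))).
  { intros A p. apply is_derive_scal, (is_derive_Rpower_comp (fun r => 1 + c * r)); [exact Hu|].
    auto_derive; [exact I|ring]. }
  destruct (qn_index_cases n a Ha)
    as [Hi|[(i & Hi & ->)|[(i & Hi & ->)|[(i & Hi & ->)|(k & Hk & ->)]]]].
  1-4: apply (is_derive_ext (fun r => X0 * Rpower (1 + c * r) pX));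
    [intros; unfold sol, qn_sym_solution; now decide_branches|].
  5: apply (is_derive_ext (fun r => Z0 * Rpower (1 + c * r) pZ));
    [intros; unfold sol, qn_sym_solution; now decide_branches|].
  all: match goal with |- is_derive (fun r => ?A * Rpower _ ?p) _ ?l =>
         replace l with (A * (p * c / u * Rpower u p)); [apply Hderiv|] end.
  1: rewrite qn_field_X1 by exact Hi.
  2: rewrite qn_field_X2 by exact Hi.
  3: rewrite qn_field_X3 by exact Hi.
  4: rewrite qn_field_X4 by exact Hi.
  5: rewrite qn_field_Z by exact Hk.
  all: rewrite ?(HyZ (4 * n + 1)%nat), ?(HyZ (4 * n + 2)%nat), ?(HyZ (4 * n + 3)%nat),
         ?(HyZ (4 * n + k)%nat), ?Hsig, HS, ?HyX by lia.
  all: fold P Q; rewrite ?qn_sym_exponent_Z, HQ; unfold pX, c;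
    field; repeat split; (exact HD || lra).
Qed.

End SymmetricSolution.

Lemma qn_symmetric_solution_eq (n : nat) (rho : R) (T : Rbar) (g : nat -> R -> R) :
  QnRB_solution n rho T g -> Rbar_lt 0 T ->
  6 + 2 * INR n - 6 * INR n * rho <> 0 ->
  (forall j : nat, (1 <= j <= 4 * n)%nat -> g j 0 = g 1%nat 0) ->
  g (4 * n + 2)%nat 0 = g (4 * n + 1)%nat 0 ->
  g (4 * n + 3)%nat 0 = g (4 * n + 1)%nat 0 ->
  let X0 := g 1%nat 0 in
  let Z0 := g (4 * n + 1)%nat 0 in
  let c := Z0 / X0 ^ 2 * (6 + 2 * INR n - 6 * INR n * rho) in
  forall t : R, 0 <= t -> Rbar_lt t T -> 0 < 1 + c * t ->
  forall a, (1 <= a <= 4 * n + 3)%nat ->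
  g a t = qn_sym_solution n X0 Z0 c
            (3 * (1 - 2 * INR n * rho) / (6 + 2 * INR n - 6 * INR n * rho))
            (- INR n * (1 + 3 * rho) / (3 + INR n - 3 * INR n * rho)) a t.
Proof.
  intros Hsol HT HD HX HZ2 HZ3 X0 Z0 c t Ht HtT Hct.
  set (sol := qn_sym_solution n X0 Z0 c _ _).
  assert (HX0 : 0 < X0) by (apply (proj1 Hsol); [lia|lra|exact HT]).
  assert (HZ0 : 0 < Z0) by (apply (proj1 Hsol); [lia|lra|exact HT]).
  assert (Hinit : forall a, (1 <= a <= 4 * n + 3)%nat -> g a 0 = sol a 0).
  { intros a Ha. unfold sol, c. rewrite qn_sym_solution_0 by assumption.
    destruct (Nat.leb_spec a (4 * n)); [now apply HX|].
    assert (a = 4 * n + 1 \/ a = 4 * n + 2 \/ a = 4 * n + 3)%nat as [->|[->| ->]] by lia; auto. }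
  intros a Ha. destruct (Rle_lt_or_eq_dec 0 t Ht) as [Htpos| <-]; [|now apply Hinit].
  assert (HsT : forall s, 0 <= s <= t -> Rbar_lt s T)
    by (intros s Hs; apply (Rbar_le_lt_trans s t T); [simpl; lra|exact HtT]).
  assert (Hu : forall s, 0 <= s <= t -> 0 < 1 + c * s)
    by (intros s Hs; destruct (Rle_or_lt 0 c); nra).
  rewrite <- (clamp0_nonneg (g a) t) by lra.
  apply (ode_unique_pos (4 * n + 3) (qn_field n rho) (fun b => clamp0 (g b)) sol t Htpos);
    [apply box_lipschitz_qn_field| | | |exact Ha].
  - intros b s Hb Hs. split; split.
    + apply (qn_solution_clamp0 n rho T g b s Hsol Hb); [lra|apply HsT; lra].
    + apply (qn_solution_clamp0 n rho T g b s Hsol Hb); [lra|apply HsT; lra].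
    + unfold sol, qn_sym_solution. destruct (b <=? 4 * n)%nat;
        apply Rmult_lt_0_compat; auto; apply exp_pos.
    + eapply continuity_pt_of_is_derive, is_derive_qn_sym_solution; auto.
  - intros b s Hb Hs. split.
    + apply (qn_solution_clamp0 n rho T g b s Hsol Hb); [lra|apply HsT; lra|lra].
    + apply is_derive_qn_sym_solution; auto. apply Hu; lra.
  - intros b Hb. rewrite clamp0_nonneg by lra. now apply Hinit.
Qed.

Theorem theorem2p7 (n : nat) (rho : R) (T : Rbar) (g : nat -> R -> R) :
  (1 <= n)%nat ->
  Rbar_lt 0 T ->
  QnRB_solution n rho T g ->
  (* (a) *)
  (1 + 3 * rho <> 0 ->
   forall t : R, 0 < t -> Rbar_lt t T ->
     is_derive (QnRB_invariant n rho g) t 0) /\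
  (* (b) *)
  (rho < 0 -> T = p_infty ->
   forall k : nat, (1 <= k <= 3)%nat ->
     is_lim (fun t => RInt (g (4 * n + k)%nat) 0 t) p_infty p_infty) /\
  (* (c) *)
  (6 + 2 * INR n - 6 * INR n * rho <> 0 ->
   (forall j : nat, (1 <= j <= 4 * n)%nat -> g j 0 = g 1%nat 0) ->
   g (4 * n + 2)%nat 0 = g (4 * n + 1)%nat 0 ->
   g (4 * n + 3)%nat 0 = g (4 * n + 1)%nat 0 ->
   let c := g (4 * n + 1)%nat 0 / (g 1%nat 0) ^ 2
            * (6 + 2 * INR n - 6 * INR n * rho) in
   forall t : R, 0 <= t -> Rbar_lt t T -> 0 < 1 + c * t ->
     (forall j : nat, (1 <= j <= 4 * n)%nat ->
        g j t = g 1%nat 0 * Rpower (1 + c * t)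
          (3 * (1 - 2 * INR n * rho) / (6 + 2 * INR n - 6 * INR n * rho))) /\
     (forall k : nat, (1 <= k <= 3)%nat ->
        g (4 * n + k)%nat t = g (4 * n + 1)%nat 0 * Rpower (1 + c * t)
          (- INR n * (1 + 3 * rho) / (3 + INR n - 3 * INR n * rho)))).
Proof.
  intros _ HT Hsol. split; [|split].
  - intros Hr t Ht HtT. exact (qn_invariant_is_derive n rho T g t Hsol Hr Ht HtT).
  - intros Hr -> k Hk. exact (qn_RInt_Z_diverges n rho g k Hsol Hr Hk).
  - intros HD HX HZ2 HZ3 c t Ht HtT Hct.
    pose proof (qn_symmetric_solution_eq n rho T g Hsol HT HD HX HZ2 HZ3 t Ht HtT Hct) as Hsym.
    split; intros b Hb; rewrite Hsym by lia; unfold qn_sym_solution; now decide_branches.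
Qed.
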